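(* Let $\mathcal{G}$ be a finite-dimensional solvable Lie algebra with a vector space decomposition $\mathcal{G}=\bigoplus_{p\in I}V_p$ satisfying $[V_p,V_q]\subset\bigoplus_{r\in i(p,q)}V_r$ for a map $i:I\times I\to 2^I$, and let $S$ be a finite abelian semigroup with a decomposition $S=\bigcup_{p\in I}S_p$ into subsets satisfying the resonance condition $S_p\cdot S_q\subset\bigcap_{r\in i(p,q)}S_r$. Then the resonant subalgebra $\mathcal{G}_{S,R}=\bigoplus_{p\in I}S_p\otimes V_p$ of the $S$-expanded algebra $\mathcal{G}_S=S\otimes\mathcal{G}$ is solvable.
   Context: For a Lie algebra $\mathcal{G}$ with basis $\{X_i\}$, $[X_i,X_j]=C_{ij}^kX_k$, and a finite abelian semigroup $S=\{\lambda_\alpha\}$ with 2-selector $K_{\alpha\beta}^\gamma$ ($=1$ if $\lambda_\alpha\lambda_\beta=\lambda_\gamma$, else $0$), the $S$-expanded algebra $\mathcal{G}_S=S\otimes\mathcal{G}$ has basis $\lambda_\alpha\otimes X_i$ and bracket $[\lambda_\alpha\otimes X_i,\lambda_\beta\otimes X_j]=K_{\alpha\beta}^\gamma C_{ij}^k\,\lambda_\gamma\otimes X_k$. Here $S_p\cdot S_q$ denotes the set of all products of an element of $S_p$ with an element of $S_q$; under the resonance condition, $\bigoplus_p S_p\otimes V_p$ (spanned by $\lambda_{\alpha}\otimes v$ with $\lambda_\alpha\in S_p$, $v\in V_p$) is a subalgebra of $\mathcal{G}_S$, called the resonant subalgebra. *)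

From HB Require Import structures.
From mathcomp Require Import all_boot all_order all_algebra.
Set Implicit Arguments. Unset Strict Implicit. Unset Printing Implicit Defensive.
Import GRing.Theory.
Local Open Scope ring_scope.

Definition is_lie_bracket (K : fieldType) (L : vectType K) (br : L -> L -> L) :=
  [/\ (forall a (x y z : L), br (a *: x + y) z = a *: br x z + br y z),
      (forall a (x y z : L), br z (a *: x + y) = a *: br z x + br z y),
      (forall x : L, br x x = 0) &
      (forall x y z : L, br x (br y z) + br y (br z x) + br z (br x y) = 0)].

(* Derived subspace [U,U] : span of all brackets of elements of U
   (by bilinearity, spanned by brackets of basis vectors of U). *)
Definition derived (K : fieldType) (L : vectType K) (br : L -> L -> L)
  (U : {vspace L}) : {vspace L} :=
  <<[seq br u v | u <- vbasis U, v <- vbasis U]>>%VS.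

Definition solvable_sub (K : fieldType) (L : vectType K) (br : L -> L -> L)
  (U : {vspace L}) : Prop :=
  exists n : nat, iter n (derived br) U = 0%VS.

(* S-expanded algebra G_S = S (x) G, realized as {ffun S -> L}:
   f  <->  \sum_a lambda_a (x) f a.  Bracket:
   [f,g] c = \sum_{a b | a b = c} [f a, g b]. *)
Definition expanded_br (K : fieldType) (L : vectType K) (br : L -> L -> L)
  (S : finType) (mulS : S -> S -> S) (f g : {ffun S -> L}) : {ffun S -> L} :=
  [ffun c => \sum_(a : S) \sum_(b : S | mulS a b == c) br (f a) (g b)].

Definition stensor (K : fieldType) (L : vectType K) (S : finType)
  (a : S) (v : L) : {ffun S -> L} :=
  [ffun c => if c == a then v else 0].

(* Resonant subspace  \bigoplus_p S_p (x) V_p : spanned by lambda_a (x) v with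
   a in S_p, v in V_p (v ranging over a basis of V_p suffices by linearity). *)
Definition resonant_sub (K : fieldType) (L : vectType K) (S : finType)
  (I : finType) (V : I -> {vspace L}) (Sp : I -> {set S}) :
  {vspace {ffun S -> L}} :=
  <<flatten [seq [seq stensor a v | a <- enum (Sp p), v <- vbasis (V p)] | p <- enum I]>>%VS.

From HB Require Import structures.
From mathcomp Require Import all_boot all_order all_algebra.
Import GRing.Theory.
Local Open Scope ring_scope.

(* So if the derived series of L vanishes at step n,
   so does the one of every subspace of G_S, the resonant one included. *)

Section Bilinear.
Variables (K : fieldType) (L : vectType K) (br : L -> L -> L).
Hypothesis br_lie : is_lie_bracket br.

Lemma br0l z : br 0 z = 0.
Proof.
case: br_lie => linl _ _ _; have := linl 1 0 0 z.
by rewrite scaler0 addr0 scale1r => /eqP; rewrite addrC -subr_eq subrr eq_sym => /eqP.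
Qed.

Lemma br0r z : br z 0 = 0.
Proof.
case: br_lie => _ linr _ _; have := linr 1 0 0 z.
by rewrite scaler0 addr0 scale1r => /eqP; rewrite addrC -subr_eq subrr eq_sym => /eqP.
Qed.

Lemma brDl z x y : br (x + y) z = br x z + br y z.
Proof. by case: br_lie => linl _ _ _; have := linl 1 x y z; rewrite !scale1r. Qed.

Lemma brDr z x y : br z (x + y) = br z x + br z y.
Proof. by case: br_lie => _ linr _ _; have := linr 1 x y z; rewrite !scale1r. Qed.

Lemma brZl a x z : br (a *: x) z = a *: br x z.
Proof. by case: br_lie => linl _ _ _; have := linl a x 0 z; rewrite !addr0 br0l addr0. Qed.

Lemma brZr a x z : br z (a *: x) = a *: br z x.
Proof. by case: br_lie => _ linr _ _; have := linr a x 0 z; rewrite !addr0 br0r addr0. Qed.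

Lemma mem_derived (U : {vspace L}) x y :
  x \in U -> y \in U -> br x y \in derived br U.
Proof.
move=> xU yU; rewrite (coord_vbasis xU) (coord_vbasis yU).
rewrite (big_morph (br^~ _) (brDl _) (br0l _)).
apply: memv_suml => i _; rewrite brZl; apply: memvZ.
rewrite (big_morph (br _) (brDr _) (br0r _)).
apply: memv_suml => j _; rewrite brZr; apply: memvZ.
apply/memv_span/allpairsP.
by exists ((vbasis U)`_i, (vbasis U)`_j); split=> //=; apply: mem_nth; rewrite size_tuple.
Qed.

End Bilinear.

Section Expansion.
Variables (K : fieldType) (L : vectType K) (br : L -> L -> L).
Variables (S : finType) (mulS : S -> S -> S).
Hypothesis br_lie : is_lie_bracket br.

Lemma memv_span_app (X : seq {ffun S -> L}) (U : {vspace L}) (f : {ffun S -> L}) c :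
  {in X, forall g : {ffun S -> L}, g c \in U} -> f \in <<X>>%VS -> f c \in U.
Proof.
move=> XU fX; rewrite (coord_span (X := in_tuple X) fX) sum_ffunE.
apply: memv_suml => i _; rewrite ffunE; apply/memvZ/XU.
exact/mem_nth/ltn_ord.
Qed.

Lemma derived_expanded_app (W : {vspace {ffun S -> L}}) (U : {vspace L}) :
  (forall (f : {ffun S -> L}) c, f \in W -> f c \in U) ->
  forall (f : {ffun S -> L}) c, f \in derived (expanded_br br mulS) W -> f c \in derived br U.
Proof.
move=> WU f c; apply: memv_span_app => _ /allpairsP[[g h] /= [gW hW ->]].
rewrite ffunE; apply: memv_suml => a _; apply: memv_suml => b _.
by apply: mem_derived => //; apply: WU; apply: vbasis_mem.
Qed.

Lemma iter_derived_expanded_app m (W : {vspace {ffun S -> L}}) (f : {ffun S -> L}) c :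
  f \in iter m (derived (expanded_br br mulS)) W -> f c \in iter m (derived br) fullv.
Proof.
elim: m f c => [|m IHm] f c /=; first by rewrite memvf.
exact: derived_expanded_app.
Qed.

Lemma solvable_expanded_sub (W : {vspace {ffun S -> L}}) :
  solvable_sub br fullv -> solvable_sub (expanded_br br mulS) W.
Proof.
case=> n derL0; exists n; apply/eqP; rewrite -subv0; apply/subvP => f fW.
suff -> : f = 0 by apply: mem0v.
apply/ffunP => c; rewrite ffunE; apply/eqP; rewrite -memv0 -derL0.
exact: iter_derived_expanded_app fW.
Qed.

End Expansion.

Theorem theorem2 (K : fieldType) (L : vectType K) (br : L -> L -> L)
  (I : finType) (V : I -> {vspace L}) (idx : I -> I -> {set I})
  (S : finType) (mulS : S -> S -> S) (Sp : I -> {set S}) :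
  is_lie_bracket br ->
  solvable_sub br fullv ->
  (\sum_(p : I) V p)%VS = fullv ->
  directv (\sum_(p : I) V p) ->
  (forall p q (x y : L), x \in V p -> y \in V q ->
      br x y \in (\sum_(r in idx p q) V r)%VS) ->
  associative mulS -> commutative mulS ->
  \bigcup_(p : I) Sp p = [set: S] ->
  (forall p q r a b, r \in idx p q -> a \in Sp p -> b \in Sp q ->
      mulS a b \in Sp r) ->
  solvable_sub (expanded_br br mulS) (resonant_sub V Sp).
Proof. by move=> br_lie solvL _ _ _ _ _ _ _; apply: solvable_expanded_sub. Qed.
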